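(* Let $t,t',\Delta\in\mathbb{N}$ with $t\le t'$. If $A$ $(t,\Delta)$-approximates $B$, then there exists $u\in(t-\Delta,t]$ such that $A$ $(t',\Delta)$-approximates $B\cap[u]$.
   Context: $\mathbb{N}=\{0,1,2,\dots\}$, $[t]=\{0,1,\dots,t\}$. For $A\subseteq[t]$ and $b\in\mathbb{N}$ define $\mathrm{apx}^-_t(b,A)=\max\{a\in A\cup\{t+1\}: a\le b\}$ and $\mathrm{apx}^+_t(b,A)=\min\{a\in A\cup\{t+1\}: a\ge b\}$, with $\max\emptyset=-\infty$, $\min\emptyset=\infty$. $A$ $(t,\Delta)$-approximates $B$ if $A\subseteq B\subseteq[t]$ and for every $b\in B$, $\mathrm{apx}^+_t(b,A)-\mathrm{apx}^-_t(b,A)\le\Delta$. *)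

From mathcomp Require Import all_boot.
Set Implicit Arguments. Unset Strict Implicit. Unset Printing Implicit Defensive.

(* Sets of naturals are boolean predicates [pred nat]; [t] = {0,...,t}. *)

(* apx^-_t(b,A) = max{a in A u {t+1} : a <= b};  None encodes -oo (empty max). *)
Definition apx_minus (t b : nat) (A : pred nat) : option nat :=
  let s := [seq a <- iota 0 b.+1 | (a \in A) || (a == t.+1)] in
  if s is x :: s' then Some (last x s') else None.

(* apx^+_t(b,A) = min{a in A u {t+1} : a >= b};  None encodes +oo (empty min).
   The search is over b..t+1; this is exact for every A included in [t]
   (the only case in which the paper defines apx). *)
Definition apx_plus (t b : nat) (A : pred nat) : option nat :=
  let s := [seq a <- iota b (t.+2 - b) | (a \in A) || (a == t.+1)] in
  if s is x :: _ then Some x else None.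

(* A (t,Delta)-approximates B.  A difference involving -oo or +oo is +oo,
   hence never <= Delta (encoded as false). *)
Definition approximates (t Delta : nat) (A B : pred nat) : Prop :=
  {subset A <= B} /\ {subset B <= [pred x | x <= t]} /\
  forall b, b \in B ->
    match apx_plus t b A, apx_minus t b A with
    | Some hi, Some lo => (hi <= lo + Delta)
    | _, _ => false
    end.

(* Let m be the largest element of A.  Elements of B above m are approximated
   from above only by the sentinel t+1, so they exist only if t < m + Delta;
   hence u := m if t < m + Delta and u := t otherwise keeps exactly the part of
   B lying below m.  For b <= m <= t both the predecessor and the successor of b
   in A u {t+1} lie in A, so they do not change when t grows to t'.  If A is
   empty then so is B, and u := t works. *)
From mathcomp Require Import all_boot.
From mathcomp Require Import zify.

Set Implicit Arguments.
Unset Strict Implicit.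

Lemma apx_plus_mem t b A hi : apx_plus t b A = Some hi ->
  b <= hi /\ (hi \in A) || (hi == t.+1).
Proof.
rewrite /apx_plus; set s := filter _ _.
case Es: s => [|x s'] //= [<-].
have : x \in s by rewrite Es mem_head.
by rewrite mem_filter mem_iota => /andP[-> /andP[-> _]].
Qed.

Lemma apx_minus_mem t b A lo : apx_minus t b A = Some lo ->
  lo <= b /\ (lo \in A) || (lo == t.+1).
Proof.
rewrite /apx_minus; set s := filter _ _.
case Es: s => [|x s'] //= [<-].
have : last x s' \in s by rewrite Es mem_last.
by rewrite mem_filter mem_iota => /andP[Alo /andP[_ le_lob]]; exact: conj le_lob Alo.
Qed.

Lemma sentinel_widen t t' (A : pred nat) x : x <= t -> t <= t' ->
  (x \in A) || (x == t'.+1) = (x \in A) || (x == t.+1).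
Proof.
move=> le_xt le_tt'.
have ne_t' : x != t'.+1 by apply/eqP; lia.
have ne_t : x != t.+1 by apply/eqP; lia.
by rewrite (negbTE ne_t) (negbTE ne_t').
Qed.

Lemma apx_minus_widen t t' b A : b <= t -> t <= t' ->
  apx_minus t' b A = apx_minus t b A.
Proof.
move=> le_bt le_tt'; rewrite /apx_minus; congr (if _ is _ :: _ then _ else _).
apply: eq_in_filter => x; rewrite mem_iota => /andP[_ lt_xb].
apply: sentinel_widen => //; lia.
Qed.

Lemma apx_plus_widen t t' b A a : a \in A -> b <= a -> a <= t -> t <= t' ->
  apx_plus t' b A = apx_plus t b A.
Proof.
move=> Aa le_ba le_at le_tt'; rewrite /apx_plus.
have split_at_a T : a <= T -> iota b (T.+2 - b) =
    iota b (a.+1 - b) ++ iota a.+1 (T.+1 - a).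
  move=> le_aT; rewrite -[in iota a.+1 _](subnKC (leqW le_ba)) -iotaD.
  by congr iota; lia.
have le_at' := leq_trans le_at le_tt'.
rewrite (split_at_a t' le_at') (split_at_a t le_at) !filter_cat.
rewrite (@eq_in_filter _ _ (fun x => (x \in A) || (x == t.+1))); last first.
  by move=> x; rewrite mem_iota => /andP[_ lt_xa]; apply: sentinel_widen; lia.
have : a \in [seq x <- iota b (a.+1 - b) | (x \in A) || (x == t.+1)].
  by rewrite mem_filter mem_iota Aa /=; apply/andP; split; lia.
by case: filter.
Qed.

Lemma approximates_bracket t Delta A B b : approximates t Delta A B -> b \in B ->
  exists lo hi, [/\ lo \in A, b <= hi, (hi \in A) || (hi == t.+1) & hi <= lo + Delta].
Proof.
case=> _ [B_le_t apxB] Bb; move: (apxB b Bb) (B_le_t b Bb).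
case Ehi: apx_plus => [hi|] //; case Elo: apx_minus => [lo|] // le_hi_lo le_bt.
have [le_bhi Ahi] := apx_plus_mem Ehi; have [le_lob Alo] := apx_minus_mem Elo.
exists lo, hi; split=> //; case/orP: Alo => // /eqP lo_eq.
by move: le_bt; rewrite inE; lia.
Qed.

Lemma approximates_above_max t Delta A B m b :
    approximates t Delta A B -> {in A, forall a, a <= m} ->
  b \in B -> m < b -> t < m + Delta.
Proof.
move=> apx le_Am Bb lt_mb.
have [lo [hi [Alo le_bhi Ahi le_hi_lo]]] := approximates_bracket apx Bb.
have le_lom := le_Am lo Alo.
case/orP: Ahi => [Ahi | /eqP hi_eq]; last lia.
by have := le_Am hi Ahi; lia.
Qed.

Lemma approximates_sub t Delta A B B' :
    {subset A <= B'} -> {subset B' <= B} ->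
  approximates t Delta A B -> approximates t Delta A B'.
Proof.
move=> sAB' sB'B [_ [B_le_t apxB]].
by split=> //; split=> [b /sB'B /B_le_t | b /sB'B /apxB].
Qed.

Lemma approximates_widen t t' Delta A B : t <= t' ->
    approximates t Delta A B -> (forall b, b \in B -> exists2 a, a \in A & b <= a) ->
  approximates t' Delta A B.
Proof.
move=> le_tt' [sAB [B_le_t apxB]] B_le_A; split=> //; split.
  by move=> b /B_le_t; rewrite !inE => le_bt; lia.
move=> b Bb; have [a Aa le_ba] := B_le_A b Bb.
have le_at : a <= t by apply/B_le_t/sAB.
rewrite (apx_plus_widen Aa le_ba le_at le_tt') (apx_minus_widen _ _ le_tt').
  exact: apxB.
exact: leq_trans le_ba le_at.
Qed.

Lemma bounded_pred_maxP (A : pred nat) t : {in A, forall a, a <= t} ->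
  (exists2 m, m \in A & {in A, forall a, a <= m}) \/ A =i pred0.
Proof.
move=> le_At; have [/hasP[a _ Aa] | /hasPn A0] := boolP (has (mem A) (iota 0 t.+1)).
  by have [m Am le_Am] := @ex_maxnP A t (ex_intro _ a Aa) le_At; left; exists m.
right=> a; apply/negbTE/negP => Aa.
by move: (A0 a); rewrite mem_iota ltnS le_At // => /(_ isT) /negP[].
Qed.

Theorem lemma4p9 (t t' Delta : nat) (A B : pred nat) :
  0 < Delta -> t <= t' ->
  approximates t Delta A B ->
  exists u : nat, t < u + Delta /\ u <= t /\
    approximates t' Delta A [pred x | (x \in B) && (x <= u)].
Proof.
move=> Delta_gt0 le_tt' apx; have [sAB [B_le_t _]] := apx.
have le_At : {in A, forall a, a <= t} by move=> a /sAB /B_le_t.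
have [[m Am le_Am] | A0] := bounded_pred_maxP le_At; last first.
  have B0 b : b \notin B.
    by apply/negP=> /(approximates_bracket apx) [lo [hi [+ _]]]; rewrite A0.
  exists t; split; [lia | split=> //].
  apply: approximates_widen le_tt' _ _ => [|b]; last by rewrite inE (negbTE (B0 b)).
  by apply: approximates_sub apx => [a | b /andP[]//]; rewrite A0.
pose u := if t < m + Delta then m else t.
have le_ut : u <= t by rewrite /u; case: ifP => // _; apply: le_At.
have le_mu : m <= u by rewrite /u; case: ifP => // _; apply: le_At.
have lt_t_uDelta : t < u + Delta by rewrite /u; case: ifP => // _; lia.
have le_Bu_m b : b \in B -> b <= u -> b <= m.
  rewrite /u => Bb; case: ifP => // not_small _.
  rewrite leqNgt; apply/negP => /(approximates_above_max apx le_Am Bb).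
  by rewrite not_small.
exists u; split=> //; split=> //.
apply: approximates_widen le_tt' _ _ => [|b /andP[Bb le_bu]]; last first.
  by exists m => //; apply: le_Bu_m.
apply: approximates_sub apx => [a Aa | b /andP[]//].
by rewrite inE sAB //= (leq_trans (le_Am a Aa) le_mu).
Qed.
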